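(* Let $\mathbf{k}$ be a field, $p\ge3$ and $q\ge1$ integers, $S=\mathbf{k}[e_1,\dots,e_{qp}]$ with the graded reverse lexicographic order with $e_1>e_2>\cdots>e_{qp}$. Let $A'$ be the $(2q-1)\times((q-1)+(p-1)q)$ matrix with entries $A'_{i,j}=e_{pi+j-qp}$, where $e_0=1$ and $e_k=0$ for $k<0$ or $k>qp$. Then for every $(2q-1)\times(2q-1)$ submatrix $B$ of $A'$ with $\det B\neq 0$, the leading term of $\det B$ is the antidiagonal term $\operatorname{sgn}(w_0)\prod_{i=1}^{2q-1}B_{i,2q-i}$, where $w_0$ is the permutation $i\mapsto 2q-i$. *)

From HB Require Import structures.
From mathcomp Require Import all_boot all_order all_algebra all_fingroup.
From mathcomp Require Import mpoly.
Set Implicit Arguments. Unset Strict Implicit. Unset Printing Implicit Defensive.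
Import Order.TTheory GRing.Theory Num.Theory.
Local Open Scope ring_scope.

Definition grevlex_le (n : nat) (m1 m2 : 'X_{1..n}) : bool :=
  (mdeg m1 < mdeg m2)%N ||
  ((mdeg m1 == mdeg m2) &&
   ((m1 == m2) ||
    [exists i : 'I_n, (m2 i < m1 i)%N &&
       [forall j : 'I_n, (i < j)%N ==> (m1 j == m2 j)]])).

Definition is_grevlex_leading_term (R : ringType) (n : nat)
    (f t : {mpoly R[n]}) : Prop :=
  exists2 m : 'X_{1..n}, m \in msupp f &
    (forall m' : 'X_{1..n}, m' \in msupp f -> grevlex_le m' m) /\
    t = f@_m *: 'X_[m].

(* e_k, for k an integer, in k[e_1,...,e_N] (variable e_k is 'X_(k-1)):
   e_0 = 1, e_k = 0 for k < 0 or k > N. *)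
Definition evar (R : ringType) (N : nat) (k : int) : {mpoly R[N]} :=
  match k with
  | Posz 0 => 1
  | Posz (S m) => match insub m : option 'I_N with
                  | Some i => 'X_i
                  | None => 0
                  end
  | Negz _ => 0
  end.

(* The (2q-1) x ((q-1)+(p-1)q) matrix A' with A'_{i,j} = e_{p i + j - q p}
   (1-based indices i, j; here the 0-based ordinals i, j stand for i+1, j+1). *)
Definition Aprime (R : ringType) (p q : nat) :
    'M[{mpoly R[q * p]}]_((2 * q).-1, (q - 1) + (p - 1) * q) :=
  \matrix_(i, j) evar R (q * p)
     ((p * (i.+1))%:Z + (j.+1)%:Z - (q * p)%:Z)%R.

Definition w0 (m : nat) : 'S_m := perm (@rev_ord_inj m).

From HB Require Import structures.
From mathcomp Require Import all_boot all_order all_algebra all_fingroup.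
From mathcomp Require Import mpoly.
From mathcomp Require Import zify ring lra.
Set Implicit Arguments.
Unset Strict Implicit.
Unset Printing Implicit Defensive.
Import Order.TTheory GRing.Theory Num.Theory.
Local Open Scope ring_scope.

(* Expanding the determinant, the term of a permutation s is
   sgn(s) prod_i e_(a_i + b_(s i)) with a, b strictly increasing; it is nonzero
   iff every index lies in [0, N], and its monomial counts how often each index
   occurs.  For a convex phi the cost sum_i phi(a_i + b_(s i)) is minimal at the
   antidiagonal w0 (rearrangement inequality), strictly when phi is strictly
   convex.  Suitable choices of phi give everything: the distance to [0, N]
   shows that w0 contributes once det B <> 0; v^2 shows that no other
   permutation yields the monomial of w0, which thus keeps coefficient sgn(w0);
   (1 - v)_+ shows that w0 has the fewest factors e_0, hence the largest
   degree; and among equal degrees, (n+1)^(v-1)_+ compares exponent vectors as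
   base-(n+1) numerals, i.e. by the last differing exponent, which is the
   reverse lexicographic tie-break. *)

Definition convexz (phi : int -> int) :=
  forall u v : int, u < v -> phi (u + 1) - phi u <= phi (v + 1) - phi v.

Definition strictly_convexz (phi : int -> int) :=
  forall u v : int, u < v -> phi (u + 1) - phi u < phi (v + 1) - phi v.

Lemma strictly_convexz_convexz phi : strictly_convexz phi -> convexz phi.
Proof. by move=> phi_cvx u v /phi_cvx/ltW. Qed.

Lemma sqrz_strictly_convexz : strictly_convexz (fun v => v ^+ 2).
Proof. by move=> u v uv; rewrite !expr2; nia. Qed.

Lemma incrementz_sum (phi : int -> int) (u : int) (d : nat) :
  phi (u + d%:Z) - phi u = \sum_(k < d) (phi (u + k%:Z + 1) - phi (u + k%:Z)).
Proof.
rewrite -(big_mkord xpredT (fun k => phi (u + k%:Z + 1) - phi (u + k%:Z))).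
have shift k : u + k%:Z + 1 = u + k.+1%:Z by lia.
under eq_bigr do rewrite shift.
by rewrite (telescope_sumr (fun k => phi (u + k%:Z))) // addr0.
Qed.

Lemma convexz_supermodular phi : convexz phi ->
  forall u v x y : int, u < v -> x < y ->
  phi (u + y) + phi (v + x) <= phi (u + x) + phi (v + y).
Proof.
move=> phi_cvx u v x y uv xy.
have [d ->] : exists d : nat, y = x + d%:Z by exists `|y - x|%N; lia.
suff : phi (u + x + d%:Z) - phi (u + x) <= phi (v + x + d%:Z) - phi (v + x).
  by rewrite !addrA; lra.
rewrite !incrementz_sum; apply: ler_sum => k _; apply: phi_cvx; lia.
Qed.

Lemma strictly_convexz_supermodular phi : strictly_convexz phi ->
  forall u v x y : int, u < v -> x < y ->
  phi (u + y) + phi (v + x) < phi (u + x) + phi (v + y).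
Proof.
move=> phi_cvx u v x y uv xy.
have [d ->] : exists d : nat, y = x + d.+1%:Z by exists `|y - x|.-1%N; lia.
suff : phi (u + x + d.+1%:Z) - phi (u + x) < phi (v + x + d.+1%:Z) - phi (v + x).
  by rewrite !addrA; lra.
rewrite !incrementz_sum; apply: ltr_sum => [|k _]; last by apply: phi_cvx; lia.
by apply/hasP; exists ord0; rewrite ?mem_index_enum.
Qed.

Lemma perm_desc_eq_w0 n (s : 'S_n) :
  {homo s : i j / (i < j)%N >-> (j < i)%N} -> s = w0 n.
Proof.
move=> s_desc.
have w0_desc : {homo w0 n : i j / (i < j)%N >-> (j < i)%N}.
  by move=> i j ij; rewrite !permE /=; have := ltn_ord j; lia.
have enum_incr : sorted (relpre val ltn) (enum 'I_n).
  by rewrite -sorted_map val_enum_ord iota_ltn_sorted.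
have full (t : 'S_n) x : x \in map t (enum 'I_n).
  by rewrite -[x](permKV t) map_f ?mem_enum.
suff /eq_in_map eq_sw : map s (enum 'I_n) = map (w0 n) (enum 'I_n).
  by apply/permP => k; apply: eq_sw; rewrite mem_enum.
apply: (@irr_sorted_eq _ (relpre val gtn)) => [y x z /= yx zy|x /=|||x].
- exact: ltn_trans zy yx.
- exact: ltnn.
- exact: homo_sorted s_desc _ enum_incr.
- exact: homo_sorted w0_desc _ enum_incr.
- by rewrite !full.
Qed.

Lemma perm_ascent n (s : 'S_n) : s != w0 n ->
  [exists i : 'I_n, exists j : 'I_n, (i < j)%N && (s i < s j)%N].
Proof.
move=> s_neq; apply: contraNT s_neq => no_ascent.
apply/eqP/perm_desc_eq_w0 => i j ij.
have : s i != s j by rewrite (inj_eq perm_inj) neq_ltn ij.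
rewrite neq_ltn => /orP[sij|//]; case/negP: no_ascent.
by apply/existsP; exists i; apply/existsP; exists j; rewrite ij.
Qed.

Lemma sumr_pair (V : zmodType) (I : finType) (F : I -> V) (i j : I) : i != j ->
  \sum_k F k = F i + F j + \sum_(k | (k != i) && (k != j)) F k.
Proof.
move=> ij; rewrite (bigD1 i) // (bigD1 j) 1?eq_sym //= addrA.
by congr (_ + _); apply: eq_bigl => k; rewrite andbC.
Qed.

Section Rearrangement.

Variables (n : nat) (a b : 'I_n -> int).
Hypothesis a_incr : {homo a : i j / (i < j)%N >-> i < j}.
Hypothesis b_incr : {homo b : i j / (i < j)%N >-> i < j}.

Definition perm_cost (phi : int -> int) (s : 'S_n) := \sum_i phi (a i + b (s i)).

Lemma perm_cost_tperm phi s i j : i != j ->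
  perm_cost phi (tperm i j * s) + (phi (a i + b (s i)) + phi (a j + b (s j))) =
  perm_cost phi s + (phi (a i + b (s j)) + phi (a j + b (s i))).
Proof.
move=> ij; rewrite /perm_cost (sumr_pair _ ij) (sumr_pair _ ij) !permM tpermL tpermR.
rewrite (eq_bigr (fun k => phi (a k + b (s k)))); first by ring.
by move=> k /andP[ki kj]; rewrite permM tpermD // eq_sym.
Qed.

Lemma perm_cost_tperm_le phi (s : 'S_n) (i j : 'I_n) :
  convexz phi -> (i < j)%N -> (s i < s j)%N ->
  perm_cost phi (tperm i j * s) <= perm_cost phi s.
Proof.
move=> phi_cvx ij sij; have := perm_cost_tperm phi s (negbT (ltn_eqF ij)).
have := convexz_supermodular phi_cvx (a_incr ij) (b_incr sij); lra.
Qed.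

Lemma perm_cost_tperm_lt phi (s : 'S_n) (i j : 'I_n) :
  strictly_convexz phi -> (i < j)%N -> (s i < s j)%N ->
  perm_cost phi (tperm i j * s) < perm_cost phi s.
Proof.
move=> phi_cvx ij sij; have := perm_cost_tperm phi s (negbT (ltn_eqF ij)).
have := strictly_convexz_supermodular phi_cvx (a_incr ij) (b_incr sij); lra.
Qed.

(* Undoing an ascent does not increase the cost and strictly decreases the
   squared cost, which is therefore a termination measure. *)
Lemma perm_cost_w0_le phi s : convexz phi -> perm_cost phi (w0 n) <= perm_cost phi s.
Proof.
move=> phi_cvx; have [k le_cost] := ubnP `|perm_cost (fun v => v ^+ 2) s|%N.
elim: k s le_cost => // k IHk s le_cost.
have [->|/perm_ascent/existsP[i /existsP[j /andP[ij sij]]]] := eqVneq s (w0 n).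
  exact: lexx.
apply: le_trans (perm_cost_tperm_le phi_cvx ij sij); apply: IHk.
have := perm_cost_tperm_lt sqrz_strictly_convexz ij sij.
have : 0 <= perm_cost (fun v => v ^+ 2) (tperm i j * s).
  by apply: sumr_ge0 => l _; exact: sqr_ge0.
lia.
Qed.

Lemma perm_cost_w0_lt phi s : strictly_convexz phi -> s != w0 n ->
  perm_cost phi (w0 n) < perm_cost phi s.
Proof.
move=> phi_cvx /perm_ascent/existsP[i /existsP[j /andP[ij sij]]].
apply: le_lt_trans (perm_cost_tperm_lt phi_cvx ij sij).
exact/perm_cost_w0_le/strictly_convexz_convexz.
Qed.

End Rearrangement.

Definition dist_range (N : nat) (v : int) : int := Num.max 0 (- v) + Num.max 0 (v - N%:Z).

Lemma dist_range_convexz N : convexz (dist_range N).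
Proof. by move=> u v uv; rewrite /dist_range; lia. Qed.

Lemma dist_range_ge0 N v : 0 <= dist_range N v.
Proof. rewrite /dist_range; lia. Qed.

Lemma dist_range_eq0 N v : (dist_range N v == 0) = (0 <= v <= N%:Z).
Proof. rewrite /dist_range; apply/eqP/idP; lia. Qed.

Definition deficit1 (v : int) : int := Num.max 0 (1 - v).

Lemma deficit1_convexz : convexz deficit1.
Proof. by move=> u v uv; rewrite /deficit1; lia. Qed.

Definition pow_pred (M : nat) (v : int) : int :=
  if v <= 0 then 1 else (M ^ (absz v).-1)%N%:Z.

Lemma pow_predS M (j : nat) : pow_pred M j.+1%:Z = (M ^ j)%N%:Z.
Proof. by []. Qed.

Lemma pow_pred_incr M v : (0 < M)%N ->
  pow_pred M (v + 1) - pow_pred M v =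
  if v <= 0 then 0 else (M ^ (absz v).-1 * M.-1)%N%:Z.
Proof.
move=> M_gt0; rewrite /pow_pred; case: (lerP v 0) => v_le0.
  case: (lerP (v + 1) 0) => v1; first by rewrite subrr.
  by rewrite (_ : (absz (v + 1)).-1 = 0%N) //; lia.
rewrite ifF; last by lia.
have -> : (absz (v + 1)).-1 = (absz v).-1.+1 by lia.
rewrite expnS; move: (M ^ (absz v).-1)%N => k; nia.
Qed.

Lemma pow_pred_convexz M : (0 < M)%N -> convexz (pow_pred M).
Proof.
move=> M_gt0 u v uv; rewrite !pow_pred_incr //.
case: (lerP u 0) => u0; case: (lerP v 0) => v0 //; try lia.
rewrite lez_nat leq_mul2r leq_pexp2l //; lia.
Qed.

Section BaseExpansion.

Variables (N M : nat).

Definition base_value (m : 'X_{1..N}) := (\sum_(j < N) m j * M ^ j)%N.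

Lemma base_value_low (d : 'I_N -> nat) (i : 'I_N) : (forall j, d j < M)%N ->
  (\sum_(j < N | (j < i)%N) d j * M ^ j < M ^ i)%N.
Proof.
move=> d_lt; apply: (@leq_ltn_trans (\sum_(j < N | (j < i)%N) M.-1 * M ^ j)).
  by apply: leq_sum => j _; rewrite leq_mul2r; have := d_lt j; lia.
rewrite -(big_ord_widen N (fun j => M.-1 * M ^ j)%N (ltnW (ltn_ord i))).
rewrite -big_distrr /= -predn_exp ltn_predL expn_gt0.
by have := d_lt i; case: M.
Qed.

Lemma base_value_split (m : 'X_{1..N}) (i : 'I_N) :
  base_value m = (\sum_(j < N | (j < i)%N) m j * M ^ j + m i * M ^ i
                  + \sum_(j < N | (i < j)%N) m j * M ^ j)%N.
Proof.
rewrite /base_value (bigD1 i) //= (bigID (fun j : 'I_N => (j < i)%N)) /=.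
rewrite (eq_bigl (fun j : 'I_N => (j < i)%N)) => [|j /=]; last first.
  by rewrite neq_ltn; case: ltngtP.
rewrite (eq_bigl (fun j : 'I_N => (i < j)%N) (P1 := fun j => _ && ~~ _)) => [|j /=].
  by lia.
by rewrite neq_ltn; case: ltngtP.
Qed.

Lemma base_value_lt (m1 m2 : 'X_{1..N}) (i : 'I_N) : (forall j, m1 j < M)%N ->
  (m1 i < m2 i)%N -> (forall j : 'I_N, i < j -> m1 j = m2 j)%N ->
  (base_value m1 < base_value m2)%N.
Proof.
move=> m1_lt lt_i eq_high; rewrite !(base_value_split _ i).
rewrite [X in (_ < _ + X)%N](eq_bigr (fun j => m1 j * M ^ j)%N); last first.
  by move=> j /eq_high ->.
rewrite ltn_add2r; apply: leq_trans (leq_addl _ _).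
have := base_value_low i m1_lt.
have : (M ^ i + m1 i * M ^ i <= m2 i * M ^ i)%N by rewrite -mulSn leq_mul2r lt_i orbT.
lia.
Qed.

Lemma base_value_last_diff (m1 m2 : 'X_{1..N}) :
  (forall j, m1 j < M)%N -> (forall j, m2 j < M)%N ->
  (base_value m2 <= base_value m1)%N -> m1 != m2 ->
  [exists i : 'I_N, (m2 i < m1 i)%N && [forall j : 'I_N, (i < j)%N ==> (m1 j == m2 j)]].
Proof.
move=> m1_lt m2_lt le_val m12.
have [j0 j0_diff] : exists j0, m1 j0 != m2 j0.
  apply/existsP; apply: contraR m12 => /existsPn same.
  by apply/eqP/mnmP => j; apply/eqP/negPn.
case: (@arg_maxnP _ j0 (fun j => m1 j != m2 j) val j0_diff) => i i_diff i_last.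
have eq_high (j : 'I_N) : (i < j)%N -> m1 j = m2 j.
  by move=> ij; apply/eqP; apply: contraTT ij => /i_last; rewrite -leqNgt.
apply/existsP; exists i; apply/andP; split; last first.
  by apply/forallP => j; apply/implyP => /eq_high ->.
case: ltngtP i_diff => // lt_i _.
have := base_value_lt m1_lt lt_i eq_high; lia.
Qed.

End BaseExpansion.

Section EvarMonomials.

Variables (R : comRingType) (N : nat).

Definition evar_mnm (v : int) : 'X_{1..N} := [multinom (v == j.+1%:Z : nat) | j < N].

Lemma evarE v : evar R N v = if 0 <= v <= N%:Z then 'X_[evar_mnm v] else 0.
Proof.
case: v => [[|k]|k] //=.
- have -> : evar_mnm 0 = 0%MM by apply/mnmP => j; rewrite !mnmE.
  by rewrite mpolyX0.
- case: insubP => [i _ val_i|k_out]; last by rewrite ifF //; apply/negbTE; lia.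
  have -> : evar_mnm k.+1 = U_(i)%MM.
    by apply/mnmP => j; rewrite mnmE mnm1E -val_i -[i == j]val_eqE.
  by rewrite lez_nat -val_i ltn_ord.
Qed.

Lemma evar_range_split (phi : int -> int) v : 0 <= v <= N%:Z ->
  phi v = (v == 0 : nat)%:Z * phi 0 + \sum_(j < N) (v == j.+1%:Z : nat)%:Z * phi j.+1%:Z.
Proof.
case: v => [[|k]|//] v_range.
  by rewrite big1 ?addr0 ?mul1r // => j _; rewrite mul0r.
have k_lt : (k < N)%N by move: v_range; rewrite lez_nat.
rewrite mul0r add0r (bigD1 (Ordinal k_lt)) //= eqxx mul1r big1 ?addr0 // => j j_neq.
suff /negbTE -> : Posz k.+1 != Posz j.+1 by rewrite mul0r.
by apply: contra j_neq => /eqP[k_j]; apply/eqP/val_inj.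
Qed.

Variables (I : finType) (x : I -> int).

Definition family_mnm : 'X_{1..N} := (\sum_i evar_mnm (x i))%MM.

Definition count_zeros : nat := (\sum_i (x i == 0 : nat))%N.

Lemma family_mnmE j : family_mnm j = (\sum_i (x i == j.+1%:Z : nat))%N.
Proof. by rewrite mnm_sumE; apply: eq_bigr => i _; rewrite mnmE. Qed.

Lemma family_mnm_le j : (family_mnm j <= #|I|)%N.
Proof.
rewrite family_mnmE -sum1_card; apply: leq_sum => i _; exact: leq_b1.
Qed.

Lemma prod_evar :
  \prod_i evar R N (x i) = if [forall i, 0 <= x i <= N%:Z] then 'X_[family_mnm] else 0.
Proof.
case: ifP => [/forallP x_range|/negbT/forallPn[i x_out]].
  by rewrite /family_mnm -mprodXE; apply: eq_bigr => i _; rewrite evarE x_range.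
by rewrite (bigD1 i) //= evarE (negbTE x_out) mul0r.
Qed.

Lemma sum_evar_range (phi : int -> int) : (forall i, 0 <= x i <= N%:Z) ->
  \sum_i phi (x i) = count_zeros%:Z * phi 0 + \sum_(j < N) (family_mnm j)%:Z * phi j.+1%:Z.
Proof.
move=> x_range; under eq_bigr do rewrite evar_range_split //.
have PoszE := big_morph Posz PoszD (erefl 0%:Z).
rewrite big_split /= exchange_big /= /count_zeros PoszE mulr_suml.
by congr (_ + _); apply: eq_bigr => j _; rewrite family_mnmE PoszE mulr_suml.
Qed.

Lemma mdeg_family_mnm : (forall i, 0 <= x i <= N%:Z) ->
  (mdeg family_mnm + count_zeros)%N = #|I|.
Proof.
move=> x_range; apply/eqP; rewrite -eqz_nat PoszD.
have := sum_evar_range (fun _ => 1) x_range.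
rewrite sumr_const natz => ->.
rewrite mdegE (big_morph Posz PoszD (erefl 0%:Z)) mulr1 addrC.
by apply/eqP; congr (_ + _); apply: eq_bigr => j _; rewrite mulr1.
Qed.

End EvarMonomials.

Lemma mul_mpoly_sign (R : nzRingType) N k (p : {mpoly R[N]}) :
  (-1) ^+ k * p = (-1) ^+ k *: p.
Proof. by rewrite -mul_mpolyC rmorph_sign. Qed.

Section AntidiagonalLeadingTerm.

Variables (R : comRingType) (N n : nat) (a b : 'I_n -> int).
Hypothesis a_incr : {homo a : i j / (i < j)%N >-> i < j}.
Hypothesis b_incr : {homo b : i j / (i < j)%N >-> i < j}.
Variable B : 'M[{mpoly R[N]}]_n.
Hypothesis B_evar : forall i k, B i k = evar R N (a i + b k).

Definition admissible (s : 'S_n) := [forall i, 0 <= a i + b (s i) <= N%:Z].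
Local Notation perm_mnm s := (family_mnm N (fun i => a i + b (s i))).
Local Notation perm_zeros s := (count_zeros (fun i => a i + b (s i))).

Lemma perm_cost_evar phi s : admissible s ->
  perm_cost a b phi s =
  (perm_zeros s)%:Z * phi 0 + \sum_(j < N) (perm_mnm s j)%:Z * phi j.+1%:Z.
Proof. by move=> /forallP adm_s; exact: sum_evar_range. Qed.

Lemma det_evar :
  \det B = \sum_(s : 'S_n) (-1) ^+ s * (if admissible s then 'X_[perm_mnm s] else 0).
Proof.
apply: eq_bigr => s _; rewrite -prod_evar; congr (_ * _).
by apply: eq_bigr => i _; rewrite B_evar.
Qed.

Lemma det_evar_coef m :
  (\det B)@_m = \sum_(s | admissible s && (perm_mnm s == m)) (-1) ^+ s.
Proof.
rewrite det_evar raddf_sum [RHS]big_mkcond; apply: eq_bigr => s _ /=.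
case: (admissible s); last by rewrite mulr0 mcoeff0.
by rewrite mul_mpoly_sign mcoeffZ mcoeffX; case: eqP; rewrite ?mulr1 ?mulr0.
Qed.

Lemma admissible_w0 : \det B != 0 -> admissible (w0 n).
Proof.
move=> det_neq0.
have [s adm_s] : exists s, admissible s.
  apply/existsP; apply: contraNT det_neq0 => /existsPn no_adm.
  by rewrite det_evar big1 // => s _; rewrite ifN ?mulr0.
have cost_s : perm_cost a b (dist_range N) s = 0.
  by apply: big1 => i _; apply/eqP; rewrite dist_range_eq0 (forallP adm_s).
have /psumr_eq0P cost_w0 : perm_cost a b (dist_range N) (w0 n) = 0.
  apply/le_anti; rewrite sumr_ge0 ?andbT => [|i _]; last exact: dist_range_ge0.
  by rewrite -cost_s; apply: perm_cost_w0_le => //; exact: dist_range_convexz.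
apply/forallP => i; rewrite -dist_range_eq0 cost_w0 // => j _; exact: dist_range_ge0.
Qed.

Lemma perm_mnm_inj_w0 s : admissible (w0 n) -> admissible s ->
  perm_mnm s = perm_mnm (w0 n) -> s = w0 n.
Proof.
move=> adm_w0 adm_s eq_mnm; have [//|s_neq] := eqVneq s (w0 n).
have := perm_cost_w0_lt a_incr b_incr sqrz_strictly_convexz s_neq.
by rewrite !perm_cost_evar // eq_mnm expr0n /= !mulr0 ltxx.
Qed.

Lemma perm_zeros_w0_le s : admissible (w0 n) -> admissible s ->
  (perm_zeros (w0 n) <= perm_zeros s)%N.
Proof.
move=> adm_w0 adm_s; have := perm_cost_w0_le a_incr b_incr s deficit1_convexz.
rewrite !perm_cost_evar //.
have deficit1_pos j : deficit1 j.+1%:Z = 0 by rewrite /deficit1; lia.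
by rewrite !big1 ?addr0 ?mulr1 ?lez_nat // => j _; rewrite deficit1_pos mulr0.
Qed.

Lemma base_value_w0_le s : admissible (w0 n) -> admissible s ->
  perm_zeros s = perm_zeros (w0 n) ->
  (base_value n.+1 (perm_mnm (w0 n)) <= base_value n.+1 (perm_mnm s))%N.
Proof.
move=> adm_w0 adm_s eq_zeros.
have cost_pow t : admissible t -> perm_cost a b (pow_pred n.+1) t =
    (perm_zeros t)%:Z * pow_pred n.+1 0 + (base_value n.+1 (perm_mnm t))%:Z.
  move=> adm_t; rewrite perm_cost_evar //; congr (_ + _).
  rewrite /base_value (big_morph Posz PoszD (erefl 0%:Z)).
  by apply: eq_bigr => j _; rewrite pow_predS PoszM.
have := perm_cost_w0_le a_incr b_incr s (pow_pred_convexz (ltn0Sn n)).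
by rewrite !cost_pow // eq_zeros lerD2l lez_nat.
Qed.

Lemma perm_mnm_grevlex_le s : admissible (w0 n) -> admissible s ->
  grevlex_le (perm_mnm s) (perm_mnm (w0 n)).
Proof.
move=> adm_w0 adm_s.
have deg_s := mdeg_family_mnm (forallP adm_s).
have deg_w0 := mdeg_family_mnm (forallP adm_w0).
rewrite /grevlex_le; have := perm_zeros_w0_le adm_w0 adm_s.
rewrite leq_eqVlt => /orP[/eqP eq_zeros|lt_zeros]; last by apply/orP; left; lia.
have -> : mdeg (perm_mnm s) = mdeg (perm_mnm (w0 n)) by lia.
rewrite ltnn eqxx /=.
have [_|neq_mnm] /= := eqVneq (perm_mnm s) (perm_mnm (w0 n)); first by [].
have digits_lt (t : 'S_n) j : (perm_mnm t j < n.+1)%N.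
  by have := @family_mnm_le N _ (fun i => a i + b (t i)) j; rewrite card_ord.
have le_val := base_value_w0_le adm_w0 adm_s (esym eq_zeros).
exact: base_value_last_diff (digits_lt s) (digits_lt (w0 n)) le_val neq_mnm.
Qed.

Theorem det_evar_leading_term : \det B != 0 ->
  is_grevlex_leading_term (\det B) ((-1) ^+ (w0 n) * \prod_(i < n) B i (rev_ord i)).
Proof.
move=> det_neq0; have adm_w0 := admissible_w0 det_neq0.
have coef_w0 : (\det B)@_(perm_mnm (w0 n)) = (-1) ^+ (w0 n).
  rewrite det_evar_coef (big_pred1 (w0 n)) // => s /=.
  apply/andP/eqP => [[adm_s /eqP]|->]; last by rewrite adm_w0 eqxx.
  exact: perm_mnm_inj_w0.
exists (perm_mnm (w0 n)); first by rewrite mcoeff_msupp coef_w0 signr_eq0.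
split=> [m|].
  rewrite mcoeff_msupp det_evar_coef => coef_neq0.
  have [s /andP[adm_s /eqP <-]] : exists s, admissible s && (perm_mnm s == m).
    apply/existsP; apply: contraNT coef_neq0 => /existsPn none.
    by rewrite big_pred0 ?eqxx // => s; exact: negbTE (none s).
  exact: perm_mnm_grevlex_le.
rewrite coef_w0 -mul_mpoly_sign; congr (_ * _).
have := prod_evar R N (fun i => a i + b (w0 n i)); rewrite (ifT _ _ adm_w0) => <-.
by apply: eq_bigr => i _; rewrite B_evar permE.
Qed.

End AntidiagonalLeadingTerm.

Theorem proposition5p5 (F : fieldType) (p q : nat) (hp : (3 <= p)%N) (hq : (1 <= q)%N)
    (f : 'I_((2 * q).-1) -> 'I_((q - 1) + (p - 1) * q))
    (hf : forall a b : 'I_((2 * q).-1), (a < b)%N -> (f a < f b)%N) :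
  let B := colsub f (Aprime F p q) in
  \det B != 0 ->
  is_grevlex_leading_term (\det B)
    ((-1) ^+ (w0 (2 * q).-1) *
       \prod_(i < (2 * q).-1) B i (rev_ord i)).
Proof.
(* Only the monotonicity of the row and column offsets matters, not [hp], [hq]. *)
move=> B; apply: (@det_evar_leading_term _ _ _
  (fun i => (p * i.+1)%N%:Z - (q * p)%N%:Z) (fun k => (f k).+1%:Z)).
- by move=> i j ij; nia.
- by move=> i j /hf; lia.
- by move=> i k; rewrite !mxE; congr evar; lia.
Qed.
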